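(* Let $n$ be a nonnegative integer and let $x,y$ be complex numbers such that no denominator below vanishes. Then \[ \sum_{k=0}^{n}(-1)^k\binom{n}{k} \frac{\binom{\frac{x}{2}+k}{k}\binom{x-\frac{1}{2}+k}{k}\binom{y+k}{k}} {\binom{\frac{x-1}{2}+k}{k}\binom{x-\frac{1}{2}+n+k}{k}\binom{x-y-\frac{1}{2}+k}{k}} \frac{1+2x+4k}{1+2x+2n+2k}H_{2k}(x) =\frac{1}{2}\frac{\binom{x-\frac{1}{2}+n}{n}\binom{\frac{x-3}{2}-y+n}{n}} {\binom{\frac{x-1}{2}+n}{n}\binom{x-y-\frac{1}{2}+n}{n}} \big\{H_n(\tfrac{x-1}{2})-H_n(\tfrac{x-3}{2}-y)\big\}. \]
   Context: For complex $z$ and a nonnegative integer $k$, $\binom{z}{k}=\frac{z(z-1)\cdots(z-k+1)}{k!}$ (with $\binom{z}{0}=1$). For complex $x$ and nonnegative integer $m$, $H_0(x)=0$ and $H_m(x)=\sum_{j=1}^m\frac{1}{x+j}$ for $m\ge1$. The parameters are assumed to be such that all denominators are nonzero. *)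

From mathcomp Require Import all_boot all_order all_algebra.
Set Implicit Arguments. Unset Strict Implicit. Unset Printing Implicit Defensive.
Import Order.TTheory GRing.Theory Num.Theory.
Local Open Scope ring_scope.

Definition cbinom (F : fieldType) (z : F) (k : nat) : F :=
  (\prod_(i < k) (z - i%:R)) / (k`!)%:R.

Definition charm (F : fieldType) (m : nat) (x : F) : F :=
  \sum_(1 <= j < m.+1) (x + j%:R)^-1.

(* Put a = x + 1/2, b = y + 1 and c = x/2 + 1.  Splitting H_(2k)(x) into its odd and even
   terms, the left-hand side is half of  sum_k F(n,k) (H_k(a-c) + H_k(c-1)),  where
     F(n,k) = (-1)^k C(n,k) (a)_k (b)_k (c)_k / ((1+a-b)_k (1+a-c)_k (a+n)_k) * (a+2k)/(a+n+k)
   is the terminating very-well-poised 5F4 term.  The weight H_k(a-c) + H_k(c-1) is the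
   logarithmic derivative in c of (c)_k/(1+a-c)_k, so the theorem is the c-derivative of the
   summation  sum_k F(n,k) = (a)_n (1+a-b-c)_n / ((1+a-b)_n (1+a-c)_n).
   Both identities are proved by induction on n, shifting (a,b,c) to (a+2,b+1,c+1).  A
   contiguous relation writes F(n+1,k+1) as the ratio of consecutive right-hand sides times the
   shifted F(n,k), plus the difference V(k+1) - V(k) of an explicit certificate V.  For the
   weighted sum, summation by parts moves the weight onto V, and the resulting sum telescopes
   against the second certificate V(k) ((1+a-c+k)^-1 + c^-1). *)

From mathcomp Require Import all_boot all_order all_algebra.
From mathcomp Require Import ring.
Import GRing.Theory Num.Theory.
Set Implicit Arguments.
Unset Strict Implicit.
Unset Printing Implicit Defensive.
Local Open Scope ring_scope.

Lemma neq0_eq (V : nmodType) (u v : V) : v != 0 -> u = v -> u != 0.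
Proof. by move=> + ->. Qed.

Ltac neq0_by_ring := match goal with
  | H : is_true (_ != 0) |- is_true (_ != 0) => apply: (neq0_eq H); ring
  end.

Ltac field_nz := field; repeat (apply/andP; split); try first [done | neq0_by_ring].

Section Pochhammer.
Variable R : pzSemiRingType.
Implicit Types (z : R) (k : nat).

Definition poch z k : R := \prod_(i < k) (z + i%:R).

Lemma poch0 z : poch z 0 = 1.
Proof. by rewrite /poch big_ord0. Qed.

Lemma poch_recr z k : poch z k.+1 = poch z k * (z + k%:R).
Proof. by rewrite /poch big_ord_recr. Qed.

Lemma poch_recl z k : poch z k.+1 = z * poch (z + 1) k.
Proof.
rewrite /poch big_ord_recl addr0; congr (_ * _); apply: eq_bigr => i _.
by rewrite /= -nat1r addrA.
Qed.

Lemma poch_rec2l z k : poch z k.+2 = z * (z + 1) * poch (z + 2%:R) k.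
Proof. by rewrite poch_recl poch_recl mulrA -addrA. Qed.

End Pochhammer.

Lemma poch_neq0P (R : idomainType) (z : R) k :
  reflect (forall i, (i < k)%N -> z + i%:R != 0) (poch z k != 0).
Proof.
apply: (iffP (prodf_neq0 _ _)) => [h i lt_ik | h i _]; last exact: h.
exact: (h (Ordinal lt_ik)).
Qed.

Lemma poch_neq0_of (R : idomainType) (z : R) k m :
  (forall i, (i < m)%N -> z + i%:R != 0) -> (k <= m)%N -> poch z k != 0.
Proof. by move=> h le_km; apply/poch_neq0P => i lt_ik; apply/h/(leq_trans lt_ik). Qed.

Lemma poch_succ_neq0 (R : idomainType) (z : R) k :
  poch z k.+1 != 0 -> poch (z + 1) k != 0.
Proof. by rewrite poch_recl mulf_eq0 negb_or => /andP[]. Qed.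

Lemma cbinom_poch (F : fieldType) (z : F) k :
  cbinom (z + k%:R) k = poch (z + 1) k / (k`!)%:R.
Proof.
rewrite /cbinom; congr (_ / _); elim: k => [|k IHk]; first by rewrite big_ord0 poch0.
rewrite big_ord_recl poch_recr -IHk subr0 mulrC; congr (_ * _); last by ring.
by apply: eq_bigr => i _; rewrite lift0; ring.
Qed.

Section Harmonic.
Variable F : fieldType.
Implicit Types (z : F) (m : nat).

Lemma charm0 z : charm 0 z = 0.
Proof. by rewrite /charm big_geq. Qed.

Lemma charmS m z : charm m.+1 z = charm m z + (z + m.+1%:R)^-1.
Proof. by rewrite /charm big_nat_recr. Qed.

Lemma charm_recl m z : charm m.+1 z = (z + 1)^-1 + charm m (z + 1).
Proof.
rewrite /charm big_nat_recl // big_add1 /=; congr (_ + _).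
by rewrite [RHS]big_add1 /=; apply: eq_bigr => j _; rewrite -addrA nat1r.
Qed.

End Harmonic.

Lemma charm_double (R : numFieldType) k (x : R) :
  charm (2 * k) x = 2%:R^-1 * (charm k ((x - 1) / 2%:R) + charm k (x / 2%:R)).
Proof.
have half_inv (u : R) : 2%:R^-1 * (u / 2%:R)^-1 = u^-1.
  by rewrite invfM invrK mulrCA mulVf ?mulr1 ?pnatr_eq0.
elim: k => [|k IHk]; first by rewrite muln0 !charm0 addr0 mulr0.
have odd_term : (x - 1) / 2%:R + k.+1%:R = (x + (2 * k).+1%:R) / 2%:R by field.
have even_term : x / 2%:R + k.+1%:R = (x + (2 * k).+2%:R) / 2%:R by field.
rewrite mulnS !addSn add0n !charmS IHk odd_term even_term.
by rewrite -[in LHS](half_inv (_ + (2 * k).+1%:R)) -(half_inv (_ + (2 * k).+2%:R)); ring.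
Qed.

Section Binomial.
Variable R : numFieldType.

Lemma natr_binSS n j :
  ('C(n.+1, j.+1))%:R = n.+1%:R / j.+1%:R * ('C(n, j))%:R :> R.
Proof.
have jS_neq0 : j.+1%:R != 0 :> R by rewrite pnatr_eq0.
have /(congr1 (GRing.natmul (1 : R))) := mul_bin_diag n.+1 j.
rewrite /= !natrM => eq_bin; apply: (mulfI jS_neq0); rewrite -eq_bin; field_nz.
Qed.

Lemma natr_binS n j : (j <= n)%N ->
  ('C(n, j.+1))%:R = (n%:R - j%:R) / j.+1%:R * ('C(n, j))%:R :> R.
Proof.
move=> le_jn; have jS_neq0 : j.+1%:R != 0 :> R by rewrite pnatr_eq0.
have /(congr1 (GRing.natmul (1 : R))) := mul_bin_left n j.
rewrite !natrM natrB // => eq_bin; apply: (mulfI jS_neq0); rewrite eq_bin; field_nz.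
Qed.

End Binomial.

Lemma sumr_by_parts (R : pzRingType) (u v : nat -> R) m :
  \sum_(0 <= j < m) (u j.+1 - u j) * v j.+1 =
  u m * v m - u 0%N * v 0%N - \sum_(0 <= j < m) u j * (v j.+1 - v j).
Proof.
rewrite -(telescope_sumr (fun j => u j * v j)) // -sumrB.
by apply: eq_bigr => j _; rewrite mulrBl mulrBr opprB addrA subrK.
Qed.

Section WellPoised.
Variable R : numFieldType.
Implicit Types (a b c : R) (n j k : nat).

Definition wp_term n a b c k :=
  poch a k * poch b k * poch c k /
    (poch (1 + a - b) k * poch (1 + a - c) k * poch (a + n%:R) k) *
  ((-1) ^+ k * ('C(n, k))%:R) * ((a + 2%:R * k%:R) / (a + n%:R + k%:R)).

Definition wp_sum n a b c := \sum_(0 <= k < n.+1) wp_term n a b c k.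

Definition wp_weight a c k := charm k (a - c) + charm k (c - 1).

Definition wp_wsum n a b c :=
  \sum_(0 <= k < n.+1) wp_term n a b c k * wp_weight a c k.

Definition wp_value n a b c :=
  poch a n * poch (1 + a - b - c) n / (poch (1 + a - b) n * poch (1 + a - c) n).

Definition wp_wvalue n a b c := charm n (a - c) - charm n (a - b - c).

Definition wp_admissible n a b c : Prop :=
  [/\ forall i, (i < n.+1)%N -> a + n%:R + i%:R != 0,
      forall i, (i < n)%N -> 1 + a - b + i%:R != 0,
      forall i, (i < n)%N -> 1 + a - c + i%:R != 0,
      forall i, (i < n)%N -> c + i%:R != 0 &
      forall i, (i < n)%N -> 1 + a - b - c + i%:R != 0].

Definition wp_ratio n a b c :=
  a * (a + 1) * (1 + a - b - c + n%:R) / ((a + n.+1%:R) * (1 + a - b) * (1 + a - c)).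

Definition wp_cert n a b c j :=
  (-1) ^+ j * ('C(n, j))%:R * poch a j.+1 * poch (b + 1) j * poch (c + 1) j /
  (poch (1 + a - b) j * poch (1 + a - c) j * poch (a + n.+1%:R) j.+1).

Definition wp_wcert n a b c j :=
  wp_cert n a b c j * ((1 + a - c + j%:R)^-1 + c^-1).

Lemma wp_cert_last n a b c : wp_cert n a b c n.+1 = 0.
Proof. by rewrite /wp_cert bin_small // !(mulr0, mul0r). Qed.

Lemma wp_weight0 a c : wp_weight a c 0 = 0.
Proof. by rewrite /wp_weight !charm0 addr0. Qed.

Lemma wp_weight_diff a c j :
  wp_weight a c j.+1 - wp_weight a c j = (a - c + j.+1%:R)^-1 + (c - 1 + j.+1%:R)^-1.
Proof. by rewrite /wp_weight !charmS; ring. Qed.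

Lemma wp_weight_succ a c j :
  wp_weight a c j.+1 = wp_weight a c 1 + wp_weight (a + 2%:R) (c + 1) j.
Proof.
rewrite /wp_weight !charm_recl !charm0 !addr0.
rewrite (_ : a + 2%:R - (c + 1) = a - c + 1); last by ring.
by rewrite (_ : c + 1 - 1 = c - 1 + 1); ring.
Qed.

Section Step.
Variables (n : nat) (a b c : R).
Hypothesis adm : wp_admissible n.+1 a b c.

Let an_neq0 i : (i < n.+2)%N -> a + n.+1%:R + i%:R != 0.
Proof. by case: adm => h _ _ _ _; apply: h. Qed.
Let ab_neq0 i : (i < n.+1)%N -> 1 + a - b + i%:R != 0.
Proof. by case: adm => _ h _ _ _; apply: h. Qed.
Let ac_neq0 i : (i < n.+1)%N -> 1 + a - c + i%:R != 0.
Proof. by case: adm => _ _ h _ _; apply: h. Qed.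
Let c_neq0 i : (i < n.+1)%N -> c + i%:R != 0.
Proof. by case: adm => _ _ _ h _; apply: h. Qed.

(* The facts below are not referred to by name: [field_nz] finds them in the context. *)
Let an0 : a + n.+1%:R != 0.
Proof. by have := an_neq0 (ltn0Sn _); rewrite addr0. Qed.
Let ab0 : 1 + a - b != 0.
Proof. by have := ab_neq0 (ltn0Sn _); rewrite addr0. Qed.
Let ac0 : 1 + a - c != 0.
Proof. by have := ac_neq0 (ltn0Sn _); rewrite addr0. Qed.
Let c0 : c != 0.
Proof. by have := c_neq0 (ltn0Sn _); rewrite addr0. Qed.
Let abcn : 1 + a - b - c + n%:R != 0.
Proof. by case: adm => _ _ _ _; apply. Qed.

Let poch_neq0 j : (j <= n)%N ->
  [/\ poch (1 + a - b) j != 0, poch (1 + a - c) j != 0 & poch (a + n.+1%:R) j != 0].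
Proof.
move=> le_jn; split.
- exact: poch_neq0_of ab_neq0 (leqW le_jn).
- exact: poch_neq0_of ac_neq0 (leqW le_jn).
- exact: poch_neq0_of an_neq0 (leqW (leqW le_jn)).
Qed.

Let factors_neq0 j : (j <= n)%N ->
  [/\ 1 + a - b + j%:R != 0, 1 + a - c + j%:R != 0, a + n.+1%:R + j%:R != 0 &
      a + n.+1%:R + j.+1%:R != 0].
Proof.
move=> le_jn; split; [exact: ab_neq0 | exact: ac_neq0 | exact: an_neq0 (leqW _) |].
exact: an_neq0.
Qed.

Let shifted_neq0 j : (j <= n)%N ->
  [/\ poch (1 + a - b + 1) j != 0, poch (1 + a - c + 1) j != 0 &
      poch (a + n.+1%:R + 1) j != 0].
Proof.
move=> le_jn; split; apply: poch_succ_neq0.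
- exact: poch_neq0_of ab_neq0 (le_jn : j < n.+1)%N.
- exact: poch_neq0_of ac_neq0 (le_jn : j < n.+1)%N.
- exact: poch_neq0_of an_neq0 (leqW le_jn : j < n.+2)%N.
Qed.

Lemma wp_ratio_shift j : (j <= n)%N ->
  wp_ratio n a b c * wp_term n (a + 2%:R) (b + 1) (c + 1) j =
  (-1) ^+ j * ('C(n, j))%:R * poch a j.+2 * poch (b + 1) j * poch (c + 1) j *
  (1 + a - b - c + n%:R) * (a + 2%:R * j.+1%:R) /
  (poch (1 + a - b) j.+1 * poch (1 + a - c) j.+1 * poch (a + n.+1%:R) j.+1 *
   (a + n.+1%:R + j.+1%:R)).
Proof.
move=> le_jn; have [_ _ _ ?] := factors_neq0 le_jn.
have [? ? ?] := shifted_neq0 le_jn.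
rewrite /wp_ratio /wp_term poch_rec2l !poch_recl.
rewrite (_ : 1 + (a + 2%:R) - (b + 1) = 1 + a - b + 1); last by ring.
rewrite (_ : 1 + (a + 2%:R) - (c + 1) = 1 + a - c + 1); last by ring.
rewrite (_ : a + 2%:R + n%:R = a + n.+1%:R + 1); last by ring.
field_nz.
Qed.

Lemma wp_term_succ j : (j <= n)%N ->
  wp_term n.+1 a b c j.+1 =
  wp_ratio n a b c * wp_term n (a + 2%:R) (b + 1) (c + 1) j +
  (wp_cert n a b c j.+1 - wp_cert n a b c j).
Proof.
move=> le_jn; have [? ? ?] := poch_neq0 le_jn.
have [? ? ? ?] := factors_neq0 le_jn.
have jS : j.+1%:R != 0 :> R by rewrite pnatr_eq0.
rewrite wp_ratio_shift // /wp_term /wp_cert natr_binSS natr_binS // exprS.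
rewrite (poch_recl b) (poch_recl c) !poch_recr.
field_nz.
Qed.

Lemma wp_term0 : wp_term n.+1 a b c 0 = wp_cert n a b c 0.
Proof. by rewrite /wp_term /wp_cert !poch_recr !poch0 !bin0 !expr0; field_nz. Qed.

Lemma wp_wcert0 :
  wp_cert n a b c 0 * (wp_weight a c 1 - wp_weight a c 0) = wp_wcert n a b c 0.
Proof. by rewrite wp_weight_diff /wp_wcert; field_nz. Qed.

Lemma wp_wcert_succ j : (j < n)%N ->
  wp_cert n a b c j.+1 * (wp_weight a c j.+2 - wp_weight a c j.+1) =
  wp_wcert n a b c j.+1 - wp_wcert n a b c j +
  ((1 + a - b - c + n%:R)^-1 + c^-1) *
  (wp_ratio n a b c * wp_term n (a + 2%:R) (b + 1) (c + 1) j).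
Proof.
move=> lt_jn; have le_jn := ltnW lt_jn.
have [? ? ?] := poch_neq0 le_jn; have [? ? ? ?] := factors_neq0 le_jn.
have ? := ac_neq0 (lt_jn : j.+1 < n.+1)%N; have ? := c_neq0 (lt_jn : j.+1 < n.+1)%N.
have jS : j.+1%:R != 0 :> R by rewrite pnatr_eq0.
rewrite wp_weight_diff /wp_wcert wp_ratio_shift // /wp_cert natr_binS // exprS !poch_recr.
field_nz.
Qed.

Lemma wp_wcert_last :
  wp_wcert n a b c n =
  ((1 + a - b - c + n%:R)^-1 + c^-1) *
  (wp_ratio n a b c * wp_term n (a + 2%:R) (b + 1) (c + 1) n).
Proof.
have [? ? ?] := poch_neq0 (leqnn n); have [? ? ? ?] := factors_neq0 (leqnn n).
by rewrite /wp_wcert wp_ratio_shift // /wp_cert !poch_recr; field_nz.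
Qed.

Lemma wp_sum_succ :
  wp_sum n.+1 a b c = wp_ratio n a b c * wp_sum n (a + 2%:R) (b + 1) (c + 1).
Proof.
rewrite /wp_sum big_nat_recl // wp_term0.
under eq_big_nat => j /andP[_ le_jn] do rewrite wp_term_succ //.
by rewrite big_split telescope_sumr //= wp_cert_last -mulr_sumr; ring.
Qed.

Lemma wp_cert_wsum :
  \sum_(0 <= j < n.+1) wp_cert n a b c j * (wp_weight a c j.+1 - wp_weight a c j) =
  ((1 + a - b - c + n%:R)^-1 + c^-1) *
  (wp_ratio n a b c * wp_sum n (a + 2%:R) (b + 1) (c + 1)).
Proof.
rewrite big_nat_recl // wp_wcert0.
under eq_big_nat => j /andP[_ lt_jn] do rewrite wp_wcert_succ //.
rewrite big_split telescope_sumr //= wp_wcert_last /wp_sum big_nat_recr //=.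
by rewrite -!mulr_sumr; ring.
Qed.

Lemma wp_wsum_succ :
  wp_wsum n.+1 a b c =
  wp_ratio n a b c * (wp_wsum n (a + 2%:R) (b + 1) (c + 1) +
    ((1 + a - c)^-1 - (1 + a - b - c + n%:R)^-1) * wp_sum n (a + 2%:R) (b + 1) (c + 1)).
Proof.
rewrite /wp_wsum big_nat_recl // wp_weight0 mulr0 add0r.
under eq_big_nat => j /andP[_ le_jn] do rewrite wp_term_succ // mulrDl.
rewrite big_split /= sumr_by_parts wp_cert_last wp_weight0 mul0r mulr0 subrr sub0r.
rewrite wp_cert_wsum.
under eq_bigr => j _ do rewrite wp_weight_succ mulrDr -!(mulrA (wp_ratio n a b c)).
rewrite big_split /= -!mulr_sumr -mulr_suml -/(wp_sum _ _ _ _) -/(wp_wsum _ _ _ _).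
rewrite /wp_weight !charmS !charm0.
field_nz.
Qed.

Lemma wp_value_succ :
  wp_value n.+1 a b c = wp_ratio n a b c * wp_value n (a + 2%:R) (b + 1) (c + 1).
Proof.
have [? ? ?] := shifted_neq0 (leqnn n).
have [? ? _] := poch_neq0 (leqnn n); have [? ? _ _] := factors_neq0 (leqnn n).
rewrite /wp_value /wp_ratio.
have -> : poch a n.+1 = poch a n.+2 / (a + n.+1%:R) by rewrite [poch a n.+2]poch_recr mulfK.
rewrite poch_rec2l (poch_recl (1 + a - b)) (poch_recl (1 + a - c)).
rewrite (_ : 1 + (a + 2%:R) - (b + 1) - (c + 1) = 1 + a - b - c); last by ring.
rewrite (_ : 1 + (a + 2%:R) - (b + 1) = 1 + a - b + 1); last by ring.
rewrite (_ : 1 + (a + 2%:R) - (c + 1) = 1 + a - c + 1); last by ring.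
by rewrite poch_recr; field_nz.
Qed.

End Step.

Lemma wp_admissible_shift n a b c :
  wp_admissible n.+1 a b c -> wp_admissible n (a + 2%:R) (b + 1) (c + 1).
Proof.
case=> an_neq0 ab_neq0 ac_neq0 c_neq0 abc_neq0; split=> i; rewrite -ltnS => le_in.
- by apply: (neq0_eq (an_neq0 i.+1 le_in)); ring.
- by apply: (neq0_eq (ab_neq0 i.+1 le_in)); ring.
- by apply: (neq0_eq (ac_neq0 i.+1 le_in)); ring.
- by apply: (neq0_eq (c_neq0 i.+1 le_in)); ring.
- by apply: (neq0_eq (abc_neq0 i (ltnW le_in))); ring.
Qed.

Lemma wp_wvalue_succ n a b c :
  wp_wvalue n.+1 a b c =
  wp_wvalue n (a + 2%:R) (b + 1) (c + 1) + ((1 + a - c)^-1 - (1 + a - b - c + n%:R)^-1).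
Proof.
rewrite /wp_wvalue charm_recl charmS.
rewrite (_ : a + 2%:R - (c + 1) = a - c + 1); last by ring.
rewrite (_ : a + 2%:R - (b + 1) - (c + 1) = a - b - c); last by ring.
rewrite (_ : a - c + 1 = 1 + a - c); last by ring.
by rewrite (_ : a - b - c + n.+1%:R = 1 + a - b - c + n%:R); ring.
Qed.

Lemma wp_sumE n a b c : wp_admissible n a b c -> wp_sum n a b c = wp_value n a b c.
Proof.
elim: n a b c => [|n IHn] a b c adm.
  have [+ _ _ _ _] := adm => /(_ 0%N isT) a_neq0.
  by rewrite /wp_sum /wp_value big_nat1 /wp_term !poch0 bin0 expr0; field_nz.
by rewrite wp_sum_succ // IHn ?wp_value_succ //; apply: wp_admissible_shift.
Qed.

Lemma wp_wsumE n a b c :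
  wp_admissible n a b c -> wp_wsum n a b c = wp_value n a b c * wp_wvalue n a b c.
Proof.
elim: n a b c => [|n IHn] a b c adm.
  by rewrite /wp_wsum /wp_wvalue big_nat1 wp_weight0 !charm0 !(mulr0, subr0).
have adm' := wp_admissible_shift adm.
by rewrite wp_wsum_succ // IHn // wp_sumE // wp_value_succ // wp_wvalue_succ; ring.
Qed.
End WellPoised.

Section Specialization.
Variables (R : numFieldType) (x y : R) (n : nat).

Local Notation a := (x + 2%:R^-1).
Local Notation b := (y + 1).
Local Notation c := (x / 2%:R + 1).

Let two_neq0 : 2%:R != 0 :> R. Proof. by rewrite pnatr_eq0. Qed.
Let half_neq0 : 2%:R^-1 != 0 :> R. Proof. by rewrite invr_eq0. Qed.

Lemma wp_admissible_of
    (hn : forall k, (k <= n)%N -> 1 + 2%:R * x + 2%:R * n%:R + 2%:R * k%:R != 0)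
    (hx : forall j, (1 <= j <= 2 * n)%N -> x + j%:R != 0)
    (hxy : cbinom (x - y - 2%:R^-1 + n%:R) n != 0)
    (hx1 : forall j, (1 <= j <= n)%N -> (x - 1) / 2%:R + j%:R != 0)
    (hxy3 : forall j, (1 <= j <= n)%N -> (x - 3%:R) / 2%:R - y + j%:R != 0) :
  wp_admissible n a b c.
Proof.
move: hxy; rewrite cbinom_poch mulf_eq0 negb_or => /andP[/poch_neq0P hxy _].
split=> i le_in.
- by apply: (neq0_eq (mulf_neq0 half_neq0 (hn i le_in))); field.
- by apply: (neq0_eq (hxy i le_in)); field.
- by apply: (neq0_eq (hx1 i.+1 le_in)); field.
- have le_2i : (1 <= i.*2.+2 <= 2 * n)%N by rewrite mul2n -doubleS leq_double.
  by apply: (neq0_eq (mulf_neq0 half_neq0 (hx _ le_2i))); rewrite -muln2; field.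
- by apply: (neq0_eq (hxy3 i.+1 le_in)); field.
Qed.

Hypothesis adm : wp_admissible n a b c.

Let poch_denoms_neq0 k : (k <= n)%N ->
  [/\ poch (1 + a - b) k != 0, poch (1 + a - c) k != 0 & poch (a + n%:R) k != 0].
Proof.
case: adm => an ab ac _ _ le_kn.
by split; [exact: poch_neq0_of ab le_kn | exact: poch_neq0_of ac le_kn |
  exact: poch_neq0_of an (leqW le_kn)].
Qed.

Lemma wp_term_cbinom k : (k <= n)%N ->
  (-1) ^+ k * ('C(n, k))%:R *
  ((cbinom (x / 2%:R + k%:R) k * cbinom (x - 2%:R^-1 + k%:R) k
     * cbinom (y + k%:R) k)
   / (cbinom ((x - 1) / 2%:R + k%:R) k * cbinom (x - 2%:R^-1 + n%:R + k%:R) k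
      * cbinom (x - y - 2%:R^-1 + k%:R) k))
  * ((1 + 2%:R * x + 4%:R * k%:R) / (1 + 2%:R * x + 2%:R * n%:R + 2%:R * k%:R))
  * charm (2 * k) x
  = 2%:R^-1 * (wp_term n a b c k * wp_weight a c k).
Proof.
move=> le_kn; have [? ? ?] := poch_denoms_neq0 le_kn.
have akn : a + n%:R + k%:R != 0 by case: adm => + _ _ _ _; apply.
have akn2 : 1 + 2%:R * x + 2%:R * n%:R + 2%:R * k%:R != 0.
  by apply: (neq0_eq (mulf_neq0 two_neq0 akn)); field.
have kfact : (k`!)%:R != 0 :> R by rewrite pnatr_eq0 -lt0n fact_gt0.
rewrite charm_double !cbinom_poch /wp_term /wp_weight.
rewrite (_ : a - c = (x - 1) / 2%:R); last by field.
rewrite (_ : c - 1 = x / 2%:R); last by ring.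
rewrite (_ : x - 2%:R^-1 + 1 = a); last by field.
rewrite (_ : (x - 1) / 2%:R + 1 = 1 + a - c); last by field.
rewrite (_ : x - 2%:R^-1 + n%:R + 1 = a + n%:R); last by field.
rewrite (_ : x - y - 2%:R^-1 + 1 = 1 + a - b); last by field.
field_nz.
Qed.

Lemma wp_value_cbinom :
  2%:R^-1 *
  ((cbinom (x - 2%:R^-1 + n%:R) n * cbinom ((x - 3%:R) / 2%:R - y + n%:R) n)
   / (cbinom ((x - 1) / 2%:R + n%:R) n * cbinom (x - y - 2%:R^-1 + n%:R) n))
  * (charm n ((x - 1) / 2%:R) - charm n ((x - 3%:R) / 2%:R - y))
  = 2%:R^-1 * (wp_value n a b c * wp_wvalue n a b c).
Proof.
have [? ? _] := poch_denoms_neq0 (leqnn n).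
have nfact : (n`!)%:R != 0 :> R by rewrite pnatr_eq0 -lt0n fact_gt0.
rewrite !cbinom_poch /wp_value /wp_wvalue.
rewrite (_ : a - c = (x - 1) / 2%:R); last by field.
rewrite (_ : a - b - c = (x - 3%:R) / 2%:R - y); last by field.
rewrite (_ : x - 2%:R^-1 + 1 = a); last by field.
rewrite (_ : (x - 3%:R) / 2%:R - y + 1 = 1 + a - b - c); last by field.
rewrite (_ : (x - 1) / 2%:R + 1 = 1 + a - c); last by field.
rewrite (_ : x - y - 2%:R^-1 + 1 = 1 + a - b); last by field.
field_nz.
Qed.

End Specialization.

Theorem theorem6 (C : numClosedFieldType) (n : nat) (x y : C)
  (* all denominators on the left-hand side are nonzero *)
  (hden : forall k : nat, (k <= n)%N ->
     [/\ cbinom ((x - 1) / 2%:R + k%:R) k != 0,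
         cbinom (x - 2%:R^-1 + n%:R + k%:R) k != 0,
         cbinom (x - y - 2%:R^-1 + k%:R) k != 0,
         1 + 2%:R * x + 2%:R * n%:R + 2%:R * k%:R != 0 &
         forall j : nat, (1 <= j <= 2 * k)%N -> x + j%:R != 0])
  (* all denominators on the right-hand side are nonzero *)
  (hd1 : cbinom ((x - 1) / 2%:R + n%:R) n != 0)
  (hd2 : cbinom (x - y - 2%:R^-1 + n%:R) n != 0)
  (hd3 : forall j : nat, (1 <= j <= n)%N -> (x - 1) / 2%:R + j%:R != 0)
  (hd4 : forall j : nat, (1 <= j <= n)%N -> (x - 3%:R) / 2%:R - y + j%:R != 0) :
  \sum_(0 <= k < n.+1)
     (-1) ^+ k * ('C(n, k))%:R *
     ((cbinom (x / 2%:R + k%:R) k * cbinom (x - 2%:R^-1 + k%:R) k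
        * cbinom (y + k%:R) k)
      / (cbinom ((x - 1) / 2%:R + k%:R) k * cbinom (x - 2%:R^-1 + n%:R + k%:R) k
         * cbinom (x - y - 2%:R^-1 + k%:R) k))
     * ((1 + 2%:R * x + 4%:R * k%:R) / (1 + 2%:R * x + 2%:R * n%:R + 2%:R * k%:R))
     * charm (2 * k) x
  = 2%:R^-1 *
    ((cbinom (x - 2%:R^-1 + n%:R) n * cbinom ((x - 3%:R) / 2%:R - y + n%:R) n)
     / (cbinom ((x - 1) / 2%:R + n%:R) n * cbinom (x - y - 2%:R^-1 + n%:R) n))
    * (charm n ((x - 1) / 2%:R) - charm n ((x - 3%:R) / 2%:R - y)).
Proof.
(* hd1 and the binomial conditions in hden follow from the other hypotheses. *)
have hn k (le_kn : (k <= n)%N) := let: And5 _ _ _ h _ := hden k le_kn in h.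
have [_ _ _ _ hx] := hden n (leqnn n).
have adm := wp_admissible_of hn hx hd2 hd3 hd4.
under eq_big_nat => k /andP[_ le_kn] do rewrite wp_term_cbinom //.
by rewrite -mulr_sumr -/(wp_wsum _ _ _ _) wp_wsumE // wp_value_cbinom.
Qed.
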